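(* Let $F$ be a forest and $G$ be a graph, both on $n$ vertices. Let $\mathrm{comp}(F)$ be the number of components of $F$ that contain at least one edge, and let $\ell(F)$ be the number of vertices of $F$ of degree $1$. If $$3\Delta(G)+\ell(F)-2\,\mathrm{comp}(F)<n,$$ then $F$ and $G$ pack.
   Context: All graphs are finite and simple; $\Delta(G)$ is the maximum degree of $G$. For graphs $G$ and $H$ with $|V(G)|\ge |V(H)|$, we say $G$ and $H$ pack if there is an injective function $f:V(H)\to V(G)$ such that for every edge $xy\in E(H)$, $f(x)f(y)\notin E(G)$ (equivalently, both can be embedded in $K_{|V(G)|}$ with no edge in common). *)

From mathcomp Require Import all_boot.
Set Implicit Arguments. Unset Strict Implicit. Unset Printing Implicit Defensive.

Section Graphs.
Variable T : finType.

Definition simple_graph (e : rel T) : Prop := symmetric e /\ irreflexive e.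

Definition deg (e : rel T) (x : T) : nat := #|[set y | e x y]|.

Definition maxdeg (e : rel T) : nat := \max_(x : T) deg e x.

Definition has_cycle (e : rel T) : Prop :=
  exists c : seq T, [/\ 3 <= size c, uniq c & cycle e c].

Definition forest (e : rel T) : Prop := simple_graph e /\ ~ has_cycle e.

Definition comp_nontriv (e : rel T) : nat :=
  #|[set [set y | connect e x y] | x in [set x : T | 0 < deg e x]]|.

Definition leaves (e : rel T) : nat := #|[set x : T | deg e x == 1]|.

End Graphs.

Definition pack (TG TH : finType) (eG : rel TG) (eH : rel TH) : Prop :=
  exists f : TH -> TG, injective f /\ forall x y, eH x y -> ~~ eG (f x) (f y).

From mathcomp Require Import all_boot zify fingroup perm.
Set Implicit Arguments. Unset Strict Implicit. Unset Printing Implicit Defensive.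

(* Let the excess of a forest be the sum of max(deg x - 2, 0) over its vertices.
   Deleting a leaf u, attached to v, changes excess, leaves and nontrivial
   components so as to preserve excess + 2 comp <= leaves; hence this holds for
   every forest, and it suffices to pack F when 3 Delta(G) + excess(F) < n.  This
   again goes by deleting a leaf: given a packing f of F - u with f u, f v adjacent
   in G, swap u with a vertex w outside {v}, f^-1(N_G(f v)) and the
   (F - u)-neighbourhood of Z = f^-1(N_G(f u)).  As the F-degrees over Z sum to at
   most 2|Z| + excess(F), and v is in Z and has lost its edge to u, at most
   3 Delta(G) + excess(F) vertices are excluded. *)

Section Degrees.
Variable T : finType.
Implicit Types (e : rel T) (u x : T).

Lemma deg_subrel e1 e2 x : subrel e1 e2 -> deg e1 x <= deg e2 x.
Proof. by move=> sub12; apply/subset_leq_card/subsetP => y; rewrite !inE => /sub12. Qed.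

Lemma deg_eq0 e x : (forall y, ~~ e x y) -> deg e x = 0.
Proof.
by move=> x0; apply/eqP; rewrite cards_eq0; apply/eqP/setP => y; rewrite !inE (negbTE (x0 y)).
Qed.

Definition del_vertex e u : rel T := [rel x y | [&& e x y, x != u & y != u]].

Lemma del_vertex_sub e u : subrel (del_vertex e u) e.
Proof. by move=> x y /and3P[]. Qed.

Lemma deg_del_vertex e u x : x != u -> deg (del_vertex e u) x = deg e x - e x u.
Proof.
move=> xu; rewrite /deg [in RHS](cardsD1 u) inE addKn.
by apply: eq_card => y; rewrite !inE /del_vertex /= xu andbC.
Qed.

Lemma deg_del_vertex_at e u : deg (del_vertex e u) u = 0.
Proof.
by apply/eqP; rewrite cards_eq0; apply/eqP/setP => y; rewrite !inE /del_vertex /= eqxx andbF.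
Qed.

Lemma del_vertex_sym e u : symmetric e -> symmetric (del_vertex e u).
Proof. by move=> esym x y; rewrite /del_vertex /= esym (andbC (x != u)). Qed.

Lemma forest_del_vertex e u : forest e -> forest (del_vertex e u).
Proof.
move=> [[esym eirr] noc]; split; first split.
- exact: del_vertex_sym.
- by move=> x; rewrite /del_vertex /= eirr.
- move=> [c [c3 c_uniq c_cyc]]; apply: noc; exists c; split=> //.
  by apply: sub_cycle c_cyc; apply: del_vertex_sub.
Qed.

Lemma card_nbhd_le e (Z : {set T}) :
  #|\bigcup_(z in Z) [set y | e z y]| <= \sum_(z in Z) deg e z.
Proof.
elim/big_ind2: _ => [|m A n B leAm leBn|//]; first by rewrite cards0.
by apply: leq_trans (leq_card_setU A B) _; apply: leq_add.
Qed.

End Degrees.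

Section LeafExistence.
Variables (T : finType) (e : rel T).
Hypotheses (esym : symmetric e) (eirr : irreflexive e) (noc : ~ has_cycle e).

Lemma has_cycle_chord x z p y :
  e x z -> path e z p -> uniq [:: x, z & p] -> e x y -> y \in p -> has_cycle e.
Proof.
move=> exz zp uxp exy yp; case/splitPr: yp zp uxp => p1 p2.
rewrite cat_path => /and3P[zp1 ey _] uxp.
exists [:: x, z & rcons p1 y]; split.
- by rewrite /= size_rcons.
- apply: (subseq_uniq _ uxp); rewrite -cats1 -!cat_cons subseq_cat2l.
  exact: prefix_subseq [:: y] p2.
- by rewrite /= exz !rcons_path zp1 ey last_rcons esym exy.
Qed.

Lemma forest_leaf x y : e x y -> exists u, deg e u = 1.
Proof.
(* A path that cannot be extended at its head without closing a cycle starts at a leaf. *)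
suff leaf_of_path k a b p : #|T| - size p < k -> e a b -> path e b p ->
    uniq [:: a, b & p] -> exists u, deg e u = 1.
  move=> exy; apply: (leaf_of_path #|T|.+1 x y [::]) => //=.
    by rewrite ltnS leq_subr.
  by rewrite inE andbT; apply: contraTneq exy => ->; rewrite eirr.
clear x y; elim: k a b p => [|k IH] x z p lt_k exz zp uxp //.
case: (pickP [pred y | e x y && (y != z)]) => [y /andP[exy yz] | no_other].
- have yp : y \notin p.
    by apply/negP => yp; exact: noc (has_cycle_chord exz zp uxp exy yp).
  have yx : y != x by apply: contraTneq exy => ->; rewrite eirr.
  apply: (IH y x (z :: p)).
  + have := max_card (mem [:: x, z & p]); rewrite (card_uniqP uxp) /=.
    by move: lt_k; move: #|T| (size p) => N s; lia.
  + by rewrite esym.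
  + by rewrite /= exz zp.
  + by rewrite cons_uniq uxp andbT !inE (negbTE yx) (negbTE yz) (negbTE yp).
- exists x; rewrite /deg (_ : [set y | e x y] = [set z]) ?cards1 //.
  apply/setP => y; rewrite !inE; apply/idP/eqP => [exy|-> //].
  by apply/eqP; apply: contraFT (no_other y) => yz; rewrite /= exy yz.
Qed.

End LeafExistence.

Lemma leq_card_imset_coarser (aT rT rT' : finType) (A : {set aT})
    (g : aT -> rT) (h : aT -> rT') :
  {in A &, forall x y, h x = h y -> g x = g y} -> #|g @: A| <= #|h @: A|.
Proof.
move=> hg; case: (set_0Vmem A) => [-> | [x0 x0A]]; first by rewrite !imset0 cards0.
pose k H := g (odflt x0 [pick x in A | h x == H]).
suff -> : g @: A = k @: (h @: A) by apply: leq_imset_card.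
rewrite -imset_comp; apply: eq_in_imset => x xA; rewrite /k /=.
case: pickP => [y /andP[yA /eqP]|/(_ x)]; last by rewrite xA eqxx.
by move/esym; apply: hg.
Qed.

Definition component (T : finType) (e : rel T) (x : T) := [set y | connect e x y].

Lemma comp_nontrivE (T : finType) (e : rel T) :
  comp_nontriv e = #|component e @: [set x | 0 < deg e x]|.
Proof. by []. Qed.

Lemma component_eq (T : finType) (e : rel T) x y :
  symmetric e -> connect e x y -> component e x = component e y.
Proof.
move=> esym exy; apply/setP => z.
by rewrite !inE (same_connect (sym_connect_sym esym) exy).
Qed.

Section LeafDeletion.
Variables (T : finType) (F : rel T) (u v : T).
Hypotheses (Fsym : symmetric F) (Firr : irreflexive F).
Hypotheses (Fuv : F u v) (Fu : forall y, F u y -> y = v).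

Lemma leaf_nbr_neq : u != v.
Proof. by apply: contraTneq Fuv => ->; rewrite Firr. Qed.

Lemma deg_leaf : deg F u = 1.
Proof.
rewrite /deg (_ : [set y | F u y] = [set v]) ?cards1 //.
by apply/setP => y; rewrite !inE; apply/idP/eqP => [/Fu | ->].
Qed.

Lemma deg_del_leaf_nbr : deg F v = (deg (del_vertex F u) v).+1.
Proof.
rewrite deg_del_vertex 1?eq_sym ?leaf_nbr_neq // Fsym Fuv subn1 prednK //.
by apply/card_gt0P; exists u; rewrite inE Fsym.
Qed.

Lemma deg_del_leaf_other x : x != u -> x != v -> deg (del_vertex F u) x = deg F x.
Proof.
move=> xu xv; rewrite deg_del_vertex // Fsym.
by case: (boolP (F u x)) => [/Fu/eqP|]; rewrite ?subn0 // (negbTE xv).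
Qed.

Lemma comp_del_leaf :
  comp_nontriv F <= comp_nontriv (del_vertex F u) + (deg F v == 1).
Proof.
rewrite !comp_nontrivE; set F' := del_vertex F u.
set N := [set x | 0 < deg F x]; set N' := [set x | 0 < deg F' x].
have coarse : #|component F @: N'| <= #|component F' @: N'|.
  apply: leq_card_imset_coarser => x y _ _ eqC; apply: component_eq => //.
  have : y \in component F' x by rewrite eqC inE connect0.
  by rewrite inE; apply: connect_sub => a b /del_vertex_sub/connect1.
have sub : component F @: N \subset component F v |: component F @: N'.
  apply/subsetP => _ /imsetP[x + ->]; rewrite !inE => xN.
  have [->|xu] := eqVneq x u.
    by rewrite (component_eq Fsym (connect1 Fuv)) eqxx.
  have [xv|xv] := eqVneq x v; first by rewrite xv eqxx.
  by rewrite imset_f ?orbT // inE deg_del_leaf_other.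
apply: leq_trans (subset_leq_card sub) _; rewrite cardsU1 addnC leq_add //.
have [_|dv1] := eqVneq (deg F v) 1; first exact: leq_b1.
have vN' : v \in N' by move: dv1; rewrite inE deg_del_leaf_nbr eqSS lt0n.
by rewrite imset_f.
Qed.

Lemma sum_deg_del_leaf (g : nat -> nat) :
  \sum_x g (deg F x) + g 0 + g (deg (del_vertex F u) v)
  = \sum_x g (deg (del_vertex F u) x) + g 1 + g (deg F v).
Proof.
have vu : v != u by rewrite eq_sym leaf_nbr_neq.
have split_uv (h : T -> nat) :
    \sum_x h x = h u + h v + \sum_(x | (x != u) && (x != v)) h x.
  by rewrite (bigD1 u) // (bigD1 v) //= addnA.
rewrite !split_uv deg_leaf deg_del_vertex_at.
under [in RHS]eq_bigr => x /andP[xu xv] do rewrite deg_del_leaf_other //.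
lia.
Qed.

End LeafDeletion.

Lemma forest_ind (T : finType) (P : rel T -> Prop) :
  (forall e, (forall x y, ~~ e x y) -> P e) ->
  (forall e u v, forest e -> e u v -> (forall y, e u y -> y = v) ->
     P (del_vertex e u) -> P e) ->
  forall e, forest e -> P e.
Proof.
move=> P_edgeless P_leaf e.
have [k] := ubnP #|[set p : T * T | e p.1 p.2]|; elim: k e => // k IH e lt_k eF.
have [[x y] /= exy | no_edge] := pickP [pred p : T * T | e p.1 p.2]; last first.
  by apply: P_edgeless => x y; move: (no_edge (x, y)) => /= ->.
have [[esym eirr] noc] := eF.
have [u /eqP/cards1P[v uv]] := forest_leaf esym eirr noc exy.
have Nu z : e u z = (z == v) by rewrite -[e u z]inE uv inE.
have euv : e u v by rewrite Nu.
apply: (P_leaf e u v) => // [z|]; first by rewrite Nu => /eqP.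
have fewer_edges :
    #|[set p : T * T | del_vertex e u p.1 p.2]| < #|[set p : T * T | e p.1 p.2]|.
  apply/proper_card/properP; split.
    by apply/subsetP => -[a b]; rewrite !inE => /del_vertex_sub.
  by exists (u, v); rewrite !inE /del_vertex /= Nu !eqxx.
exact: IH (leq_trans fewer_edges lt_k) (forest_del_vertex u eF).
Qed.

Section Excess.
Variable T : finType.
Implicit Types (e : rel T).

Definition excess e := \sum_x (deg e x - 2).

Lemma excess_subrel e1 e2 : subrel e1 e2 -> excess e1 <= excess e2.
Proof. by move=> sub12; apply: leq_sum => x _; rewrite leq_sub2r // deg_subrel. Qed.

Lemma sum_deg_le_excess e (Z : {set T}) : \sum_(z in Z) deg e z <= 2 * #|Z| + excess e.
Proof.
rewrite mulnC -sum_nat_const /excess [X in _ <= _ + X](bigID (mem Z)) /=.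
rewrite addnA -big_split /= -[X in X <= _]addn0 leq_add //.
by apply: leq_sum => z _; lia.
Qed.

Lemma leavesE e : leaves e = \sum_x (deg e x == 1).
Proof. by rewrite /leaves -sum1_card big_mkcond; apply: eq_bigr => x _; rewrite inE. Qed.

Lemma forest_excess_comp e : forest e -> excess e + 2 * comp_nontriv e <= leaves e.
Proof.
move: e; apply: forest_ind => [e edgeless | e u v [[esym eirr] _] euv eu IH].
  have d0 x : deg e x = 0 by apply: deg_eq0.
  rewrite /excess big1 => [|x _]; last by rewrite d0.
  rewrite comp_nontrivE (_ : [set x | 0 < deg e x] = set0) ?imset0 ?cards0 //.
  by apply/setP => x; rewrite !inE d0.
have := sum_deg_del_leaf esym eirr euv eu (fun d => d - 2).
have := sum_deg_del_leaf esym eirr euv eu (fun d => nat_of_bool (d == 1)).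
rewrite -/(excess _) -/(excess _) -!leavesE.
move: (comp_del_leaf esym eirr euv eu) IH; rewrite (deg_del_leaf_nbr esym eirr euv).
by case: (deg (del_vertex e u) v) => [|[|d]] /=; lia.
Qed.

End Excess.

Section Packing.
Variables (T : finType) (G : rel T).
Hypothesis Gsym : symmetric G.

Section LeafStep.
Variables (F : rel T) (u v : T).
Hypotheses (Fsym : symmetric F) (Firr : irreflexive F).
Hypotheses (Fuv : F u v) (Fu : forall y, F u y -> y = v).
Variables (f : T -> T) (f_inj : injective f).

Lemma pack_swap w :
  (forall x y, del_vertex F u x y -> ~~ G (f x) (f y)) ->
  w != v -> ~~ G (f v) (f w) -> (forall y, del_vertex F u w y -> ~~ G (f u) (f y)) ->
  pack G F.
Proof.
move=> f_pack wv fvw fw; exists (f \o tperm u w); split; first exact: inj_comp perm_inj.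
have uv := leaf_nbr_neq Firr Fuv.
have F'sym := del_vertex_sym u Fsym.
move=> x y Fxy /=.
case: (eqVneq x u) Fxy => [-> /Fu -> | xu Fxy].
  by rewrite tpermL tpermD // Gsym.
case: (eqVneq y u) Fxy => [-> | yu Fxy].
  by rewrite Fsym => /Fu ->; rewrite tpermL tpermD.
have F'xy : del_vertex F u x y by rewrite /del_vertex /= Fxy xu yu.
case: (eqVneq x w) F'xy => [-> F'wy | xw F'xy].
  have yw : y != w by apply: contraTneq F'wy => ->; rewrite /del_vertex /= Firr.
  by rewrite tpermR tpermD 1?eq_sym //; apply: fw.
case: (eqVneq y w) F'xy => [-> F'xw | yw F'xy].
  by rewrite tpermR tpermD 1?eq_sym // Gsym; apply: fw; rewrite F'sym.
by rewrite !tpermD 1?eq_sym //; apply: f_pack.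
Qed.

Lemma exists_swap_target :
  3 * maxdeg G + excess F < #|T| ->
  exists w, [/\ w != v, ~~ G (f v) (f w)
              & forall y, del_vertex F u w y -> ~~ G (f u) (f y)].
Proof.
move=> small; have uv := leaf_nbr_neq Firr Fuv.
(* If f u and f v are not adjacent, w := u does, as tperm u u is the identity. *)
have [fuv | nfuv] := boolP (G (f u) (f v)); last first.
  exists u; split; [by [] | by rewrite Gsym | move=> y].
  by rewrite /del_vertex /= eqxx andbF.
have card_preG x : #|f @^-1: [set y | G x y]| <= maxdeg G.
  by rewrite card_preimset //; apply: leq_bigmax.
set Z := f @^-1: [set y | G (f u) y].
set A1 := f @^-1: [set y | G (f v) y].
set A2 := \bigcup_(z in Z) [set y | del_vertex F u z y].
have vZ : v \in Z by rewrite !inE.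
have card_A2 : #|A2| < 2 * maxdeg G + excess F.
  apply: leq_ltn_trans (card_nbhd_le _ _) _.
  apply: (@leq_trans (\sum_(z in Z) deg F z)).
    rewrite (bigD1 v vZ) [X in _ <= X](bigD1 v vZ) /= (deg_del_leaf_nbr Fsym Firr Fuv).
    rewrite addSn ltnS leq_add2l; apply: leq_sum => z _.
    exact/deg_subrel/del_vertex_sub.
  apply: leq_trans (sum_deg_le_excess F Z) _.
  by rewrite leq_add2r leq_mul2l card_preG orbT.
have /set0Pn[w] : ~: (v |: (A1 :|: A2)) != set0.
  rewrite -card_gt0; have := cardsC (v |: (A1 :|: A2)); rewrite cardsU1.
  have := (leq_card_setU A1 A2).1; have := card_preG (f v).
  have := leq_b1 (v \notin A1 :|: A2); move: card_A2 small.
  by move: #|T| #|A1| #|A2| => N a1 a2; lia.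
rewrite !inE => /norP[wv /norP[fvw wA2]].
exists w; split=> // y F'wy; apply/negP => fuy; apply: (negP wA2).
by apply/bigcupP; exists y; rewrite ?inE // del_vertex_sym.
Qed.

End LeafStep.

Lemma pack_del_leaf (F : rel T) u v :
  symmetric F -> irreflexive F -> F u v -> (forall y, F u y -> y = v) ->
  3 * maxdeg G + excess F < #|T| -> pack G (del_vertex F u) -> pack G F.
Proof.
move=> Fsym Firr Fuv Fu small [f [f_inj f_pack]].
have [w [wv fvw fw]] := exists_swap_target Fsym Firr Fuv f_inj small.
exact: (pack_swap Fsym Firr Fuv Fu f_inj f_pack wv fvw fw).
Qed.

Lemma pack_forest (F : rel T) : forest F -> 3 * maxdeg G + excess F < #|T| -> pack G F.
Proof.
move: F; apply: forest_ind => [F edgeless _ | F u v [[Fsym Firr] _] Fuv Fu IH small].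
  by exists id; split=> // x y; rewrite (negbTE (edgeless x y)).
apply: (pack_del_leaf Fsym Firr Fuv Fu small); apply: IH.
by apply: leq_ltn_trans small; rewrite leq_add2l excess_subrel //; apply: del_vertex_sub.
Qed.

End Packing.

Theorem theorem8 (n : nat) (F G : rel 'I_n) :
  forest F -> simple_graph G ->
  3 * maxdeg G + leaves F < n + 2 * comp_nontriv F ->
  pack G F.
Proof.
move=> Fforest [Gsym _] small; apply: pack_forest => //.
by have := forest_excess_comp Fforest; rewrite card_ord; lia.
Qed.
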